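(* The correspondence $\mathfrak{r}$, which associates to any $\mathbf{E}^{1}$-extension $\varepsilon \in \mathbf{E}^{1}(C,A)=\mathscr{C}(C,\Sigma A)$ (for any pair of objects $A,C$ in $\mathscr{C}$) the equivalence class $\mathfrak{r}(\varepsilon) := \mathfrak{s}(\varepsilon^{*}\delta_{A})$, is an additive realisation of $\mathbf{E}^{1}$.
   Context: Let $(\mathscr{C}, \mathbb{E}, \mathfrak{s})$ be an extriangulated category such that for every object $X \in \mathscr{C}$, the morphism $X \rightarrow 0$ is an $\mathbb{E}$-inflation and the morphism $0 \rightarrow X$ is an $\mathbb{E}$-deflation. For each object $X$, choose a cone $\Sigma X$ of $X \rightarrow 0$ and fix an $\mathbb{E}$-triangle $X \rightarrow 0 \rightarrow \Sigma X$ realising $\delta_X \in \mathbb{E}(\Sigma X, X)$. For a morphism $f \colon X \rightarrow Y$, let $\Sigma f \colon \Sigma X \rightarrow \Sigma Y$ be the unique morphism with $f_{*}\delta_{X} = (\Sigma f)^{*}\delta_{Y}$; this makes $\Sigma$ an additive auto-equivalence of $\mathscr{C}$. Let $\mathbf{E}^{1}(-,-) := \mathscr{C}(-,\Sigma -)$, a biadditive functor $\mathscr{C}^{\text{op}} \times \mathscr{C} \rightarrow Ab$; the map $\varepsilon \mapsto \varepsilon^{*}\delta_{A}$ is an isomorphism $\mathbf{E}^{1}(C,A) \cong \mathbb{E}(C,A)$. An additive realisation means: a realisation (any morphism of extensions $(a,c)$ lifts to a morphism $b$ of the realising sequences making the diagram commute) sending split extensions $0$ to the split sequence class, and such that $(i_{A})_{*}(p_{C})^{*}\varepsilon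 + (i_{A^{\prime}})_{*}(p_{C^{\prime}})^{*}\varepsilon^{\prime}$ is realised by the direct sum of the realising sequences of $\varepsilon$ and $\varepsilon^{\prime}$. *)

From mathcomp Require Import all_boot all_algebra.
Set Implicit Arguments. Unset Strict Implicit. Unset Printing Implicit Defensive.
Import GRing.Theory.
Local Open Scope ring_scope.

Record AddCat := {
  Obj : Type;
  CHom : Obj -> Obj -> zmodType;
  comp : forall X Y Z : Obj, CHom Y Z -> CHom X Y -> CHom X Z;
  idm : forall X : Obj, CHom X X;
  compA : forall X Y Z W (h : CHom Z W) (g : CHom Y Z) (f : CHom X Y),
      comp h (comp g f) = comp (comp h g) f;
  comp1m : forall X Y (f : CHom X Y), comp (idm Y) f = f;
  compm1 : forall X Y (f : CHom X Y), comp f (idm X) = f;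
  compDl : forall X Y Z (g g' : CHom Y Z) (f : CHom X Y),
      comp (g + g') f = comp g f + comp g' f;
  compDr : forall X Y Z (g : CHom Y Z) (f f' : CHom X Y),
      comp g (f + f') = comp g f + comp g f';
  zobj : Obj;
  zobj_init : forall X (f : CHom zobj X), f = 0;
  zobj_term : forall X (f : CHom X zobj), f = 0;
  bip : Obj -> Obj -> Obj;
  bi1 : forall A B, CHom A (bip A B);
  bi2 : forall A B, CHom B (bip A B);
  bp1 : forall A B, CHom (bip A B) A;
  bp2 : forall A B, CHom (bip A B) B;
  bp1i1 : forall A B, comp (bp1 A B) (bi1 A B) = idm A;
  bp2i2 : forall A B, comp (bp2 A B) (bi2 A B) = idm B;
  bp1i2 : forall A B, comp (bp1 A B) (bi2 A B) = 0;
  bp2i1 : forall A B, comp (bp2 A B) (bi1 A B) = 0;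
  bip_id : forall A B, comp (bi1 A B) (bp1 A B) + comp (bi2 A B) (bp2 A B)
                       = idm (bip A B)
}.

Arguments comp {a X Y Z}.
Arguments idm {a}.
Arguments zobj {a}.
Arguments bip {a}.
Arguments bi1 {a}. Arguments bi2 {a}. Arguments bp1 {a}. Arguments bp2 {a}.

Section Extri.
Variable C : AddCat.

(* Raw data of a bifunctor  F : C^op x C -> Ab :                       *)
(*   F Z A  (contravariant in Z, covariant in A),                      *)
(*   push a : F Z A -> F Z A'   (a_* ),  pull c : F Z A -> F Z' A  (c^* ) *)
Definition pushT (F : Obj C -> Obj C -> zmodType) :=
  forall (A A' Z : Obj C), CHom A A' -> F Z A -> F Z A'.
Definition pullT (F : Obj C -> Obj C -> zmodType) :=
  forall (Z' Z A : Obj C), CHom Z' Z -> F Z A -> F Z' A.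

(* A correspondence assigning to each extension d in F(Z,A) a class of   *)
(* sequences  A --x--> B --y--> Z ; we encode the class as a predicate.  *)
Definition corrT (F : Obj C -> Obj C -> zmodType) :=
  forall (Z A : Obj C), F Z A -> forall B : Obj C, CHom A B -> CHom B Z -> Prop.

Section Bifun.
Variables (F : Obj C -> Obj C -> zmodType) (push : pushT F) (pull : pullT F).
Arguments push {A A' Z}. Arguments pull {Z' Z A}.

Definition IsBiadditive : Prop :=
  (forall Z A (d : F Z A), push (idm A) d = d) /\
      (forall Z A (d : F Z A), pull (idm Z) d = d) /\
      (forall Z A A' A'' (a : CHom A A') (a' : CHom A' A'') (d : F Z A),
          push (comp a' a) d = push a' (push a d)) /\
      (forall Z Z' Z'' A (c : CHom Z' Z) (c' : CHom Z'' Z') (d : F Z A),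
          pull (comp c c') d = pull c' (pull c d)) /\
      (forall Z Z' A A' (a : CHom A A') (c : CHom Z' Z) (d : F Z A),
          push a (pull c d) = pull c (push a d)) /\
      (forall Z A A' (a : CHom A A') (d d' : F Z A),
          push a (d + d') = push a d + push a d') /\
      (forall Z Z' A (c : CHom Z' Z) (d d' : F Z A),
          pull c (d + d') = pull c d + pull c d') /\
      (forall Z A A' (a a' : CHom A A') (d : F Z A),
          push (a + a') d = push a d + push a' d) /\
      (forall Z Z' A (c c' : CHom Z' Z) (d : F Z A),
          pull (c + c') d = pull c d + pull c' d).
End Bifun.

Definition seq_equiv (A Z B B' : Obj C) (x : CHom A B) (y : CHom B Z)
    (x' : CHom A B') (y' : CHom B' Z) : Prop :=
  exists (b : CHom B B') (b' : CHom B' B),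
    [/\ comp b' b = idm B, comp b b' = idm B', comp b x = x' & comp y' b = y].

Definition dsum_mor (A A' B B' : Obj C) (x : CHom A B) (x' : CHom A' B')
    : CHom (bip A A') (bip B B') :=
  comp (bi1 B B') (comp x (bp1 A A')) + comp (bi2 B B') (comp x' (bp2 A A')).

Section Real.
Variables (F : Obj C -> Obj C -> zmodType) (push : pushT F) (pull : pullT F)
          (s : corrT F).
Arguments push {A A' Z}. Arguments pull {Z' Z A}. Arguments s {Z A}.

Definition IsClassCorr : Prop :=
  forall Z A (d : F Z A),
    (exists B (x : CHom A B) (y : CHom B Z), s d B x y) /\
    (forall B (x : CHom A B) (y : CHom B Z) B' (x' : CHom A B') (y' : CHom B' Z),
        s d B x y -> (s d B' x' y' <-> seq_equiv x y x' y')).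

Definition IsRealisation : Prop :=
  IsClassCorr /\
  forall Z A (d : F Z A) Z' A' (d' : F Z' A') B (x : CHom A B) (y : CHom B Z)
         B' (x' : CHom A' B') (y' : CHom B' Z') (a : CHom A A') (c : CHom Z Z'),
    s d B x y -> s d' B' x' y' -> push a d = pull c d' ->
    exists b : CHom B B', comp b x = comp x' a /\ comp y' b = comp c y.

Definition IsAdditiveRealisation : Prop :=
  [/\ IsRealisation,
      (forall Z A, s (0 : F Z A) (bip A Z) (bi1 A Z) (bp2 A Z)) &
      (forall Z A (d : F Z A) Z' A' (d' : F Z' A')
              B (x : CHom A B) (y : CHom B Z) B' (x' : CHom A' B') (y' : CHom B' Z'),
          s d B x y -> s d' B' x' y' ->
          s (push (bi1 A A') (pull (bp1 Z Z') d) + push (bi2 A A') (pull (bp2 Z Z') d'))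
            (bip B B') (dsum_mor x x') (dsum_mor y y'))].

Definition ET3 : Prop :=
  forall Z A (d : F Z A) Z' A' (d' : F Z' A') B (x : CHom A B) (y : CHom B Z)
         B' (x' : CHom A' B') (y' : CHom B' Z') (a : CHom A A') (b : CHom B B'),
    s d B x y -> s d' B' x' y' -> comp x' a = comp b x ->
    exists c : CHom Z Z', comp c y = comp y' b /\ push a d = pull c d'.

Definition ET3op : Prop :=
  forall Z A (d : F Z A) Z' A' (d' : F Z' A') B (x : CHom A B) (y : CHom B Z)
         B' (x' : CHom A' B') (y' : CHom B' Z') (b : CHom B B') (c : CHom Z Z'),
    s d B x y -> s d' B' x' y' -> comp c y = comp y' b ->
    exists a : CHom A A', comp x' a = comp b x /\ push a d = pull c d'.

Definition ET4 : Prop :=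
  forall A B D Cc Fo (d : F D A) (d' : F Fo B) (f : CHom A B) (f' : CHom B D)
         (g : CHom B Cc) (g' : CHom Cc Fo),
    s d B f f' -> s d' Cc g g' ->
    exists (E : Obj C) (h' : CHom Cc E) (dd : CHom D E) (e : CHom E Fo) (d'' : F E A),
      [/\ s d'' Cc (comp g f) h',
          s (push f' d') E dd e,
          pull dd d'' = d,
          push f d'' = pull e d' &
          (comp h' g = comp dd f' /\ comp e h' = g')].

Definition ET4op : Prop :=
  forall D A B Fo Cc (d : F B D) (d' : F Cc Fo) (f' : CHom D A) (f : CHom A B)
         (g' : CHom Fo B) (g : CHom B Cc),
    s d A f' f -> s d' B g' g ->
    exists (E : Obj C) (dd : CHom D E) (e : CHom E Fo) (h' : CHom E A) (d'' : F Cc E),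
      [/\ s d'' A h' (comp g f),
          s (pull g' d) E dd e,
          push e d'' = d',
          push dd d = pull g d'' &
          (comp h' dd = f' /\ comp f h' = comp g' e)].

Definition IsExtriangulated : Prop :=
  [/\ IsBiadditive (@push) (@pull), IsAdditiveRealisation, ET3 /\ ET3op & ET4 /\ ET4op].

End Real.

Definition E1 (Sig : Obj C -> Obj C) : Obj C -> Obj C -> zmodType :=
  fun Z A => CHom Z (Sig A).
Definition E1push (Sig : Obj C -> Obj C)
    (SigM : forall X Y : Obj C, CHom X Y -> CHom (Sig X) (Sig Y)) : pushT (E1 Sig) :=
  fun A A' Z a e => comp (SigM A A' a) e.
Definition E1pull (Sig : Obj C -> Obj C) : pullT (E1 Sig) :=
  fun Z' Z A c e => comp (e : CHom Z (Sig A)) c.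

Definition rcorr (F : Obj C -> Obj C -> zmodType) (pull : pullT F) (s : corrT F)
    (Sig : Obj C -> Obj C) (delta : forall X, F (Sig X) X) : corrT (E1 Sig) :=
  fun Z A e => s Z A (pull Z (Sig A) A e (delta A)).

End Extri.

From Pilot Require Import Defs.
From mathcomp Require Import all_boot all_algebra.
Set Implicit Arguments. Unset Strict Implicit. Unset Printing Implicit Defensive.
Import GRing.Theory.
Local Open Scope ring_scope.

(* The map [e |-> e^* delta_A] from E^1(Z, A) to E(Z, A) is additive and
   natural in both variables (naturality in A is the defining property of
   Sigma on morphisms), and [rcorr] is [s] precomposed with it.  Pulling an
   additive realisation back along any additive natural transformation of
   bifunctors gives an additive realisation: each axiom for the new
   correspondence is the old axiom applied to the image extensions. *)

Section TransportRealisation.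
Variables (C : AddCat) (F G : Obj C -> Obj C -> zmodType).
Variables (push : pushT F) (pull : pullT F) (pushG : pushT G) (pullG : pullT G).
Variable s : corrT F.
Variable phi : forall Z A : Obj C, G Z A -> F Z A.
Arguments push {A A' Z}. Arguments pull {Z' Z A}.
Arguments pushG {A A' Z}. Arguments pullG {Z' Z A}.
Arguments phi {Z A}.

Hypothesis phi_push : forall Z A A' (a : CHom A A') (d : G Z A),
  phi (pushG a d) = push a (phi d).
Hypothesis phi_pull : forall Z' Z A (c : CHom Z' Z) (d : G Z A),
  phi (pullG c d) = pull c (phi d).
Hypothesis phiD : forall Z A (d d' : G Z A), phi (d + d') = phi d + phi d'.

Definition transport_corr : corrT G := fun Z A d => s (phi d).

Lemma phi0 Z A : phi (0 : G Z A) = 0.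
Proof. by apply: (@addrI _ (phi (0 : G Z A))); rewrite -phiD !addr0. Qed.

Lemma transport_realisation :
  IsRealisation (@push) (@pull) s -> IsRealisation (@pushG) (@pullG) transport_corr.
Proof.
move=> [class_s lift_s]; split.
- by move=> Z A d; exact: class_s.
- move=> Z A d Z' A' d' B x y B' x' y' a c sd sd' e_push_pull.
  by apply: lift_s sd sd' _; rewrite -phi_push -phi_pull e_push_pull.
Qed.

Lemma transport_additive_realisation :
  IsAdditiveRealisation (@push) (@pull) s ->
  IsAdditiveRealisation (@pushG) (@pullG) transport_corr.
Proof.
move=> [real_s split_s dsum_s]; split.
- exact: transport_realisation.
- by move=> Z A; rewrite /transport_corr phi0.
- move=> Z A d Z' A' d' B x y B' x' y' sd sd'.
  by rewrite /transport_corr phiD !phi_push !phi_pull; exact: dsum_s.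
Qed.

End TransportRealisation.

Section E1Comparison.
Variables (C : AddCat) (F : Obj C -> Obj C -> zmodType).
Variables (push : pushT F) (pull : pullT F).
Variables (Sig : Obj C -> Obj C) (delta : forall X : Obj C, F (Sig X) X).
Variable SigM : forall X Y : Obj C, CHom X Y -> CHom (Sig X) (Sig Y).
Arguments push {A A' Z}. Arguments pull {Z' Z A}. Arguments SigM {X Y}.

Hypothesis pull_comp : forall Z Z' Z'' A (c : CHom Z' Z) (c' : CHom Z'' Z') (d : F Z A),
  pull (Defs.comp c c') d = pull c' (pull c d).
Hypothesis push_pull : forall Z Z' A A' (a : CHom A A') (c : CHom Z' Z) (d : F Z A),
  push a (pull c d) = pull c (push a d).
Hypothesis pullDl : forall Z Z' A (c c' : CHom Z' Z) (d : F Z A),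
  pull (c + c') d = pull c d + pull c' d.
Hypothesis push_delta : forall (X Y : Obj C) (f : CHom X Y),
  push f (delta X) = pull (SigM f) (delta Y).

Definition E1_to_E Z A (e : E1 Sig Z A) : F Z A := pull e (delta A).

Lemma E1_to_E_push Z A A' (a : CHom A A') (e : E1 Sig Z A) :
  E1_to_E (E1push (@SigM) a e) = push a (E1_to_E e).
Proof. by rewrite /E1_to_E /E1push pull_comp -push_delta push_pull. Qed.

Lemma E1_to_E_pull Z' Z A (c : CHom Z' Z) (e : E1 Sig Z A) :
  E1_to_E (E1pull c e) = pull c (E1_to_E e).
Proof. exact: pull_comp. Qed.

Lemma E1_to_ED Z A (e e' : E1 Sig Z A) :
  E1_to_E (e + e') = E1_to_E e + E1_to_E e'.
Proof. exact: pullDl. Qed.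

End E1Comparison.

Theorem proposition3p11
  (C : AddCat) (F : Obj C -> Obj C -> zmodType)
  (push : pushT F) (pull : pullT F) (s : corrT F)
  (Hextri : IsExtriangulated push pull s)
  (* for every X, 0 -> X is an E-deflation *)
  (Hdefl : forall X : Obj C,
      exists (A : Obj C) (x : CHom A zobj) (d : F X A), s X A d zobj x 0)
  (* chosen cones: X -> 0 -> Sigma X realising delta_X (so X -> 0 is an inflation) *)
  (Sig : Obj C -> Obj C) (delta : forall X : Obj C, F (Sig X) X)
  (Hdelta : forall X : Obj C, s (Sig X) X (delta X) zobj 0 0)
  (* Sigma on morphisms: f_* delta_X = (Sigma f)^* delta_Y *)
  (SigM : forall X Y : Obj C, CHom X Y -> CHom (Sig X) (Sig Y))
  (HSigM : forall (X Y : Obj C) (f : CHom X Y),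
      push X Y (Sig X) f (delta X) = pull (Sig X) (Sig Y) Y (SigM X Y f) (delta Y)) :
  IsAdditiveRealisation (E1push SigM) (E1pull (Sig := Sig)) (rcorr pull s delta).
Proof.
case: Hextri => [[_ [_ [_ [pull_comp [push_pull [_ [_ [_ pullDl]]]]]]]] addreal _ _].
apply: (transport_additive_realisation (phi := E1_to_E pull delta)) addreal.
- exact: E1_to_E_push.
- exact: E1_to_E_pull.
- exact: E1_to_ED.
Qed.
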